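(* Let $T:X\to X$ be a continuous map of a compact metric space $X$ which is not minimal. If $\mu$ is an ergodic $T$-invariant Borel probability measure with full support ($S_\mu=X$), then $\mu(A(T))=0$.
   Context: $T$ is minimal if for every $y\in X$, $\omega_T(y)=X$. $S_\mu$ is the support of $\mu$. $A(T)$ is the set of almost periodic points: $x$ such that for every open $U\ni x$ there is $N>0$ such that for every $n\ge1$ there exists $k\in[n,n+N]$ with $T^kx\in U$. *)

From HB Require Import structures.
From mathcomp Require Import all_boot all_order all_algebra.
From mathcomp Require Import all_classical all_reals all_analysis.
Set Implicit Arguments. Unset Strict Implicit. Unset Printing Implicit Defensive.
Import Order.TTheory GRing.Theory Num.Theory.
Local Open Scope classical_set_scope.
Local Open Scope ring_scope.

Notation borel X := (g_sigma_algebraType (@open X)).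

Section dyn.
Context {X : ptopologicalType}.
Implicit Types (T : X -> X).

Definition omega_limit T (y : X) : set X :=
  \bigcap_(N in [set: nat]) closure [set iter n T y | n in [set n | (N <= n)%N]].

Definition minimal T : Prop := forall y : X, omega_limit T y = [set: X].

Definition almost_periodic T : set X :=
  [set x | forall U : set X, open U -> U x ->
     exists N : nat, (0 < N)%N /\
       forall n : nat, (1 <= n)%N -> exists k : nat,
         (n <= k <= n + N)%N /\ U (iter k T x)].
End dyn.

Section meas.
Context {X : ptopologicalType} {R : realType}.
Local Open Scope ereal_scope.

Definition invariant_measure (T : X -> X) (mu : set (borel X) -> \bar R) : Prop :=
  forall A : set (borel X), measurable A -> mu (T @^-1` A) = mu A.

Definition ergodic (T : X -> X) (mu : set (borel X) -> \bar R) : Prop :=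
  invariant_measure T mu /\
  forall A : set (borel X), measurable A -> T @^-1` A = A ->
    mu A = 0 \/ mu A = 1.

Definition msupport (mu : set (borel X) -> \bar R) : set X :=
  [set x | forall U : set X, open U -> U x -> 0 < mu U].
End meas.

From HB Require Import structures.
From mathcomp Require Import all_boot all_order all_algebra.
From mathcomp Require Import all_classical all_reals all_analysis.
From mathcomp Require Import lra.
Import Order.TTheory GRing.Theory Num.Theory.
Local Open Scope classical_set_scope.
Local Open Scope ring_scope.

(* For a nonempty open set U, the points whose orbit enters U infinitely
   often form a T-invariant set; it is the decreasing intersection of the sets
   of points entering U after time N, each of which contains T^-N U and so has
   measure at least mu U > 0. By ergodicity it has full measure. Covering the
   compact space by finitely many balls of radius 1/(k+1) for every k shows
   that almost every point has a forward orbit all of whose tails are dense.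
   An almost periodic point x with this property forces minimality: its
   returns to a neighbourhood V of x have gaps at most N, so the orbit closure
   of x is covered by the closed sets T^-i (closure V), i <= N; hence every
   orbit passes near x and then follows the dense orbit of x. *)

Lemma measurable_open {X : ptopologicalType} (U : set X) :
  open U -> measurable (U : set (borel X)).
Proof. by move=> oU; apply: sub_sigma_algebra. Qed.

Section Recurrence.
Context {X : ptopologicalType} (T : X -> X).

Definition visits_after (U : set X) (N : nat) : set X :=
  \bigcup_(n in [set: nat]) (iter (n + N) T) @^-1` U.

Definition visits_io (U : set X) : set X :=
  \bigcap_(N in [set: nat]) visits_after U N.

Lemma preimage_visits_io U : T @^-1` visits_io U = visits_io U.
Proof.
apply/seteqP; split=> x xU N _ /=.
- have [m _ Tm] := xU N I.
  by exists m.+1 => //; move: Tm; rewrite /= -iterSr.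
- have [m _ Tm] := xU N.+1 I.
  by exists m => //; rewrite /= -iterSr -addnS.
Qed.

Lemma visits_after_nonincreasing U :
  {homo visits_after U : n m / (n <= m)%N >-> (m <= n)%O}.
Proof.
move=> n m nm; apply/subsetPset => x [k _ Tk].
by exists (k + (m - n))%N => //; rewrite /= -addnA subnK.
Qed.

End Recurrence.

Section ContinuousRecurrence.
Context {X : ptopologicalType} {T : X -> X} (cT : continuous T).

Lemma continuous_iter n : continuous (iter n T).
Proof.
elim: n=> [|n IHn] x /=; first exact: cvg_id.
by apply: continuous_comp; [exact: IHn | exact: cT].
Qed.

Lemma open_preimage_iter n (U : set X) : open U -> open (iter n T @^-1` U).
Proof. exact: (proj1 (continuousP _) (continuous_iter n)). Qed.

Lemma closed_preimage_iter n (U : set X) : closed U -> closed (iter n T @^-1` U).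
Proof. exact: (proj1 (continuous_closedP _) (continuous_iter n)). Qed.

Lemma measurable_visits_after U N :
  open U -> measurable (visits_after T U N : set (borel X)).
Proof.
move=> oU; apply: bigcupT_measurable => n.
by apply: measurable_open; exact: open_preimage_iter.
Qed.

Lemma measurable_visits_io U : open U -> measurable (visits_io T U : set (borel X)).
Proof. by move=> oU; apply: bigcapT_measurable => N; exact: measurable_visits_after. Qed.

End ContinuousRecurrence.

Section ErgodicRecurrence.
Context {R : realType} {X : ptopologicalType} {T : X -> X} (cT : continuous T).
Context {mu : probability (borel X) R}.
Local Open Scope ereal_scope.

Lemma measure_preimage_iter n (U : set X) : invariant_measure T mu ->
  open U -> mu (iter n T @^-1` U) = mu U.
Proof.
move=> inv oU; elim: n => [//|n IHn].
have -> : iter n.+1 T @^-1` U = T @^-1` (iter n T @^-1` U).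
  by apply/seteqP; split=> x /=; rewrite -iterSr.
rewrite inv //; apply: measurable_open; exact: open_preimage_iter.
Qed.

Lemma measure_le_visits_io U : invariant_measure T mu -> open U ->
  mu U <= mu (visits_io T U).
Proof.
move=> inv oU.
have mV N := measurable_visits_after cT U N oU.
have finV0 : mu (visits_after T U 0) < +oo.
  exact: le_lt_trans (probability_le1 _ (mV 0%N)) (ltry _).
have cvV := nonincreasing_cvg_mu finV0 mV (measurable_visits_io cT U oU)
  (@visits_after_nonincreasing _ T U).
rewrite -(cvg_lim _ cvV) //; apply: lime_ge.
  by apply/cvg_ex; exists (mu (visits_io T U)).
apply: nearW => N /=.
rewrite -(measure_preimage_iter N U inv oU); apply: le_measure; rewrite ?inE.
- by apply: measurable_open; exact: open_preimage_iter.
- exact: mV.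
- by move=> x Ux; exists 0%N.
Qed.

Lemma visits_io_ae U : ergodic T mu -> msupport mu = [set: X] ->
  open U -> U !=set0 -> mu.-negligible (~` visits_io T U).
Proof.
move=> [inv erg] full oU [u Uu].
have mVU := measurable_visits_io cT U oU.
have muU_gt0 : 0 < mu U by have /(_ U oU Uu) : msupport mu u by rewrite full.
have muVU_gt0 := lt_le_trans muU_gt0 (measure_le_visits_io U inv oU).
have muVU : mu (visits_io T U) = 1.
  have [muVU0|//] := erg _ mVU (preimage_visits_io T U).
  by move: muVU_gt0; rewrite muVU0 ltxx.
exists (~` visits_io T U); split=> //; first exact: measurableC.
by rewrite probability_setC // muVU subee.
Qed.

End ErgodicRecurrence.

Section Metric.
Context {R : realType} {X : pseudoPMetricType R}.

Lemma compact_finite_ball_cover (r : R) : compact [set: X] -> 0 < r ->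
  exists s : seq X, forall z, exists2 c, c \in s & ball c r z.
Proof.
rewrite compact_cover => cX r0.
have [D _ DX] := cX X setT (fun c => (ball c r)°) (fun c _ => open_interior _)
  (fun z _ => ex_intro2 _ _ z I (nbhsx_ballx z r r0)).
exists (finmap.enum_fset D) => z; have [c Dc zc] := DX z I.
by exists c => //; exact: interior_subset.
Qed.

Definition forward_dense (T : X -> X) (x : X) : Prop :=
  forall (z : X) (e : R) (N : nat), 0 < e ->
    exists2 n, (N <= n)%N & ball z e (iter n T x).

End Metric.

Section MetricDynamics.
Context {R : realType} {X : pseudoPMetricType R} {T : X -> X} (cT : continuous T).

Lemma forward_dense_ae (mu : probability (borel X) R) :
  compact [set: X] -> ergodic T mu -> msupport mu = [set: X] ->
  mu.-negligible (~` forward_dense T).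
Proof.
move=> cX erg full.
have /choice[s sX] : forall k : nat, exists s : seq X,
    forall z, exists2 c, c \in s & ball c k.+1%:R^-1 z.
  by move=> k; apply: compact_finite_ball_cover; rewrite // invr_gt0.
pose V k i := (ball (nth point (s k) i) k.+1%:R^-1)°.
have Vc_negligible : mu.-negligible (\bigcup_k \bigcup_i ~` visits_io T (V k i)).
  apply: negligible_bigcup => k; apply: negligible_bigcup => i.
  apply: (visits_io_ae cT _ erg full (open_interior _)).
  by exists (nth point (s k) i); apply: nbhsx_ballx; rewrite invr_gt0.
apply: negligibleS Vc_negligible => x xnd.
apply: contrapT => xV; apply: xnd => z e N e0.
have [k _ /(_ k (leqnn _)) ke] := near_infty_natSinv_lt (PosNum (divr_gt0 e0 (ltr0Sn _ 1))).
have [c cs cz] := sX k z.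
have /contrapT : ~ (~` visits_io T (V k (index c (s k)))) x.
  by move=> xVc; apply: xV; exists k => //; exists (index c (s k)).
rewrite /V nth_index // => /(_ N I)[n _ /interior_subset cx].
exists (n + N)%N; first exact: leq_addl.
apply: le_ball (ball_triangle (ball_sym cz) cx).
by rewrite [leRHS](splitr e) lerD // ltW.
Qed.

Lemma almost_periodic_orbit_closure x V : almost_periodic T x ->
  open V -> V x -> exists N : nat,
    closure [set iter j T x | j in [set j | (1 <= j)%N]] `<=`
    \bigcup_(i in `I_N.+1) iter i T @^-1` closure V.
Proof.
move=> apx oV Vx; have [N [_ returnV]] := apx V oV Vx; exists N.
have closedF : closed (\bigcup_(i in `I_N.+1) iter i T @^-1` closure V).
  apply: closed_bigcup => [|i _]; first exact: finite_II.
  exact: (closed_preimage_iter cT i _ (@closed_closure _ V)).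
rewrite [X in _ `<=` X](proj1 (closure_id _) closedF); apply: closureS.
move=> _ [j j1 <-]; have [k [/andP[jk kjN] Vk]] := returnV j j1.
exists (k - j)%N; first by rewrite /= ltnS leq_subLR.
by rewrite /= -iterD subnK //; exact: subset_closure.
Qed.

Lemma minimal_of_almost_periodic_forward_dense x :
  almost_periodic T x -> forward_dense T x -> minimal T.
Proof.
move=> apx dx y; apply/seteqP; split=> // z _ N _ W /nbhs_ballP[e /= e0 zeW].
pose d := e / 3; have d0 : 0 < d by rewrite divr_gt0.
have [m _ zd] := dx z d 0%N d0.
pose V := iter m T @^-1` (ball (iter m T x) d)°.
have oV : open V := open_preimage_iter cT m _ (open_interior _).
have Vx : V x by exact: nbhsx_ballx.
have [Nx orbit_sub] := almost_periodic_orbit_closure x V apx oV Vx.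
have closure_orbit_y : closure [set iter j T x | j in [set j | (1 <= j)%N]]
    (iter N T y).
  move=> B /nbhs_ballP[r /= r0 rB]; have [n n1 yn] := dx (iter N T y) r 1%N r0.
  by exists (iter n T x); split; [exists n | exact: rB].
have [i _ closVi] := orbit_sub _ closure_orbit_y.
have closure_Vsub : closure V `<=` iter m T @^-1` closure (ball (iter m T x) d).
  rewrite [X in _ `<=` X](proj1 (closure_id _)
    (closed_preimage_iter cT m _ (@closed_closure _ (ball (iter m T x) d)))).
  by apply: closureS => p /interior_subset; exact: subset_closure.
have [p [xp yp]] := closure_Vsub _ closVi _ (nbhsx_ballx _ _ d0).
exists (iter (m + i + N) T y); split; first by exists (m + i + N)%N; rewrite //= leq_addl.
apply: zeW; rewrite !iterD.
apply: le_ball (ball_triangle (ball_triangle zd xp) (ball_sym yp)).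
by rewrite /d; lra.
Qed.

End MetricDynamics.

Theorem mainTheorem13 (R : realType) (X : pseudoPMetricType R)
    (hX : hausdorff_space X) (cX : compact [set: X])
    (T : X -> X) (cT : continuous T) (nmin : ~ minimal T)
    (mu : probability (borel X) R)
    (erg : ergodic T mu) (full : msupport mu = [set: X]) :
  mu.-negligible (almost_periodic T).
Proof.
apply: negligibleS (forward_dense_ae cT mu cX erg full).
move=> x apx dx; apply: nmin.
exact: minimal_of_almost_periodic_forward_dense apx dx.
Qed.
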